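(* (Global context translation.) Let $\Delta$ be the global context collected from a FOOD program $P$, and $\Delta'$ the global context collected from $P'$, where $\Delta;\Gamma\vdash P\Rightarrow T\leadsto P'$. Then $\textsc{It}=\textsc{Dt}'$ and $\textsc{Dt}=\textsc{It}'$; for all $D\in\textsc{It}$, $\textsc{Dtr}(D)=\textsc{Csm}'(D)$ and $\textsc{Gen}(D)=\textsc{Ctr}'(D)$; and for all $D\in\textsc{Dt}$, $\textsc{Csm}(D)=\textsc{Dtr}'(D)$ and $\textsc{Ctr}(D)=\textsc{Gen}'(D)$. (This situation is written $\Delta\leadsto\Delta'$.)
   Context: FOOD programs consist of definitions followed by an expression. Definitions: datatypes $\texttt{data}\ D$; interfaces $\texttt{interface}\ D\{\overline{Dtr}\}$ with destructors (declarations $\texttt{def}\ f(\overline{x:T}):T$ or functions with a default body); constructors $\texttt{case}\ C(\overline{x:T})\ \texttt{extends}\ D$; generators $\texttt{class}\ C(\overline{x:T})\ \texttt{implements}\ D\{\overline{Fun}\}$; consumers $\texttt{def}\ f(\texttt{self}:D)(\overline{x:T}):T=\overline{\texttt{case}\ P\Rightarrow e}$. Global context (primes denote the context of $P'$): $\textsc{Dt}$ datatype names, $\textsc{It}$ interface names (only types selected for transformation are kept in these sets; unselected types have their associated sets emptied), $\textsc{Ctr}(D)$, $\textsc{Gen}(D)$, $\textsc{Dtr}(D)$, $\textsc{Csm}(D)$ the constructors, generators, destructors and consumers (first parameter of type $D$) of $D$. The translation $\Delta;\Gamma\vdash P\Rightarrow T\leadsto P'$: (It2Dt) each $\texttt{interface}\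 D\{\overline{Dtr}\}$ with $D\in\textsc{It}$ becomes $\texttt{data}\ D$ followed by one consumer $\texttt{def}\ f(\texttt{self}:D)(\overline{x:T}):T$ per destructor $f$, whose clauses are $\texttt{case}\ C(\overline y)\Rightarrow[\texttt{this}\mapsto\texttt{self}]e'$ for each generator $C(\overline{y:S})$ of $D$ implementing $f$ with translated body $e'$, plus $\texttt{case}\ \_\Rightarrow[\texttt{this}\mapsto\texttt{self}]e'$ for a translated default body $e'$; (Gen2Ctr) generators of $D\in\textsc{It}$ become constructors $\texttt{case}\ C(\overline{x:T})\ \texttt{extends}\ D$; (Dt2It) each $\texttt{data}\ D$ with $D\in\textsc{Dt}$ becomes $\texttt{interface}\ D$ with destructor $\texttt{def}\ f(\overline{x:T}):T$ for each consumer $f$ of $D$ (with default body $[\texttt{self}\mapsto\texttt{this}]e'$ if $f$ has a wildcard clause whose body translates to $e'$); (Ctr2Gen) constructors $C(\overline{x:T})$ of $D\in\textsc{Dt}$ become $\texttt{class}\ C(\overline{x:T})\ \texttt{implements}\ D$ with functions $\texttt{def}\ f(\overline{x:T}):T=[\texttt{self}\mapsto\texttt{this}]e'$ from the clauses $\texttt{case}\ C(\overline y)\Rightarrow e$ of the consumers; (CsmElim) consumers on transformed datatypes are removed; definitions of non-transformed types are kept, with only inner expressions translated. *)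

From Stdlib Require Import String List Bool.
Import ListNotations.


Definition name := string.

Inductive ty : Type := TName (D : name).

(* Expressions: variables, [this], constructor/generator calls C(es),
   destructor/consumer calls e.f(es). *)
Inductive expr : Type :=
| EVar (x : name)
| EThis
| ECall (C : name) (args : list expr)
| EInv (recv : expr) (f : name) (args : list expr).

(* The distinguished variable [self] (first parameter of consumers). *)
Definition self_var : name := "self"%string.

Fixpoint esub (fv : name -> expr) (fthis : expr) (e : expr) : expr :=
  match e with
  | EVar x => fv x
  | EThis => fthis
  | ECall C args => ECall C (map (esub fv fthis) args)
  | EInv r f args => EInv (esub fv fthis r) f (map (esub fv fthis) args)
  end.

Definition this_to_self (e : expr) : expr := esub EVar (EVar self_var) e.
Definition self_to_this (e : expr) : expr :=
  esub (fun x => if String.eqb x self_var then EThis else EVar x) EThis e.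

Definition params := list (name * ty).

Inductive dtr : Type :=
| DtrDecl (f : name) (ps : params) (ret : ty)
| DtrDef (f : name) (ps : params) (ret : ty) (body : expr).

Record fn : Type := Fn { fn_name : name; fn_params : params; fn_ret : ty; fn_body : expr }.

Inductive pat : Type := PCtr (C : name) (ys : list name) | PWild.
Definition clause := (pat * expr)%type.

Inductive defn : Type :=
| DData (D : name)
| DIface (D : name) (ds : list dtr)
| DCtr (C : name) (ps : params) (D : name)
| DGen (C : name) (ps : params) (D : name) (fs : list fn)
| DCsm (f : name) (D : name) (ps : params) (ret : ty) (cls : list clause).
                                                     (* def f(self:D)(xs:Ts):T = clauses *)

Record program : Type := Prog { prog_defs : list defn; prog_main : expr }.

Definition csig := (name * params)%type.
Definition fsig := (name * params * ty)%type.

Record gctx : Type := GCtx {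
  Dt : list name;
  It : list name;
  Ctr : name -> list csig;
  Gen : name -> list csig;
  Dtr : name -> list fsig;
  Csm : name -> list fsig }.

Definition dtr_sig (d : dtr) : fsig :=
  match d with DtrDecl f ps r => (f, ps, r) | DtrDef f ps r _ => (f, ps, r) end.

(* Global context collected from a list of definitions, given the selection
   [sel] of types to transform: only selected types are kept in Dt / It, and
   the sets associated to unselected types are empty. *)
Definition collect (sel : name -> bool) (ds : list defn) : gctx :=
  GCtx
    (flat_map (fun d => match d with DData D => if sel D then [D] else [] | _ => [] end) ds)
    (flat_map (fun d => match d with DIface D _ => if sel D then [D] else [] | _ => [] end) ds)
    (fun D => if sel D then flat_map (fun d => match d with
        | DCtr C ps D' => if String.eqb D D' then [(C, ps)] else [] | _ => [] end) ds else [])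
    (fun D => if sel D then flat_map (fun d => match d with
        | DGen C ps D' _ => if String.eqb D D' then [(C, ps)] else [] | _ => [] end) ds else [])
    (fun D => if sel D then flat_map (fun d => match d with
        | DIface D' dts => if String.eqb D D' then map dtr_sig dts else [] | _ => [] end) ds else [])
    (fun D => if sel D then flat_map (fun d => match d with
        | DCsm f D' ps r _ => if String.eqb D D' then [(f, ps, r)] else [] | _ => [] end) ds else []).

Record lctx : Type := LCtx { lthis : option ty; lvars : params }.

Definition etrans := gctx -> lctx -> expr -> ty -> expr -> Prop.

Section Trans.
Variable etr : etrans.
Variable Delta : gctx.
Variable ds : list defn.

Definition gens_impl (D f : name) : list (name * params * fn) :=
  flat_map (fun d => match d with
    | DGen C ys D' fs =>
        if String.eqb D D' then
          match find (fun g => String.eqb (fn_name g) f) fs with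
          | Some g => [(C, ys, g)] | None => [] end
        else []
    | _ => [] end) ds.

Definition csms_of (D : name) : list (name * params * ty * list clause) :=
  flat_map (fun d => match d with
    | DCsm f D' ps r cls => if String.eqb D D' then [(f, ps, r, cls)] else []
    | _ => [] end) ds.

Definition is_wild (c : clause) : bool := match fst c with PWild => true | _ => false end.
Definition is_ctr (C : name) (c : clause) : bool :=
  match fst c with PCtr C' _ => String.eqb C C' | _ => false end.

Definition csms_with_clause (D C : name) : list (name * params * ty * list name * expr) :=
  flat_map (fun d => match d with
    | DCsm f D' ps r cls =>
        if String.eqb D D' then
          match find (is_ctr C) cls with
          | Some (PCtr _ ys, e) => [(f, ps, r, ys, e)]
          | _ => [] end
        else []
    | _ => [] end) ds.

Definition ctor_fields (C : name) : params :=
  match find (fun d => match d with DCtr C' _ _ => String.eqb C C' | _ => false end) ds with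
  | Some (DCtr _ ps _) => ps | _ => [] end.

Definition pat_vars (p : pat) : params :=
  match p with PCtr C ys => combine ys (map snd (ctor_fields C)) | PWild => [] end.

Definition dtr_to_csm (D : name) (dt : dtr) (c : defn) : Prop :=
  let '(f, ps, r) := dtr_sig dt in
  exists (gcls dcl : list clause),
    Forall2 (fun (cyg : name * params * fn) (cl : clause) =>
               let '(C, ys, g) := cyg in
               exists e', etr Delta (LCtx (Some (TName D)) (ys ++ fn_params g)) (fn_body g) r e'
                          /\ cl = (PCtr C (map fst ys), this_to_self e'))
            (gens_impl D f) gcls
    /\ (match dt with
        | DtrDecl _ _ _ => dcl = []
        | DtrDef _ _ _ body =>
            exists e', etr Delta (LCtx (Some (TName D)) ps) body r e'
                       /\ dcl = [(PWild, this_to_self e')]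
        end)
    /\ c = DCsm f D ps r (gcls ++ dcl).

Definition csm_to_dtr (D : name) (cs : name * params * ty * list clause) (dt : dtr) : Prop :=
  let '(f, ps, r, cls) := cs in
  match find is_wild cls with
  | None => dt = DtrDecl f ps r
  | Some (_, e) =>
      exists e', etr Delta (LCtx None ((self_var, TName D) :: ps)) e r e'
                 /\ dt = DtrDef f ps r (self_to_this e')
  end.

Definition csm_to_fn (D : name) (xs : params)
    (cs : name * params * ty * list name * expr) (g : fn) : Prop :=
  let '(f, ps, r, ys, e) := cs in
  exists e', etr Delta (LCtx None ((self_var, TName D) :: combine ys (map snd xs) ++ ps)) e r e'
             /\ g = Fn f ps r (self_to_this e').

Definition keep_dtr (D : name) (dt dt' : dtr) : Prop :=
  match dt with
  | DtrDecl f ps r => dt' = DtrDecl f ps r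
  | DtrDef f ps r e =>
      exists e', etr Delta (LCtx (Some (TName D)) ps) e r e' /\ dt' = DtrDef f ps r e'
  end.

Definition keep_fn (D : name) (xs : params) (g g' : fn) : Prop :=
  exists e', etr Delta (LCtx (Some (TName D)) (xs ++ fn_params g)) (fn_body g) (fn_ret g) e'
             /\ g' = Fn (fn_name g) (fn_params g) (fn_ret g) e'.

Definition keep_clause (D : name) (ps : params) (r : ty) (c c' : clause) : Prop :=
  exists e', etr Delta (LCtx None ((self_var, TName D) :: pat_vars (fst c) ++ ps)) (snd c) r e'
             /\ c' = (fst c, e').

Definition transformed (D : name) : Prop := In D (Dt Delta) \/ In D (It Delta).

Inductive trans_def : defn -> list defn -> Prop :=
| T_It2Dt D dts csms :
    In D (It Delta) -> Forall2 (dtr_to_csm D) dts csms ->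
    trans_def (DIface D dts) (DData D :: csms)
| T_Gen2Ctr C ps D fs :
    In D (It Delta) -> trans_def (DGen C ps D fs) [DCtr C ps D]
| T_Dt2It D dts :
    In D (Dt Delta) -> Forall2 (csm_to_dtr D) (csms_of D) dts ->
    trans_def (DData D) [DIface D dts]
| T_Ctr2Gen C ps D fs :
    In D (Dt Delta) -> Forall2 (csm_to_fn D ps) (csms_with_clause D C) fs ->
    trans_def (DCtr C ps D) [DGen C ps D fs]
| T_CsmElim f D ps r cls :
    In D (Dt Delta) -> trans_def (DCsm f D ps r cls) []
| T_KeepData D :
    ~ transformed D -> trans_def (DData D) [DData D]
| T_KeepIface D dts dts' :
    ~ transformed D -> Forall2 (keep_dtr D) dts dts' ->
    trans_def (DIface D dts) [DIface D dts']
| T_KeepCtr C ps D :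
    ~ transformed D -> trans_def (DCtr C ps D) [DCtr C ps D]
| T_KeepGen C ps D fs fs' :
    ~ transformed D -> Forall2 (keep_fn D ps) fs fs' ->
    trans_def (DGen C ps D fs) [DGen C ps D fs']
| T_KeepCsm f D ps r cls cls' :
    ~ transformed D -> Forall2 (keep_clause D ps r) cls cls' ->
    trans_def (DCsm f D ps r cls) [DCsm f D ps r cls'].

End Trans.

Definition trans_prog (etr : etrans) (Delta : gctx) (Gamma : lctx)
    (P : program) (T : ty) (P' : program) : Prop :=
  exists outs,
    Forall2 (trans_def etr Delta (prog_defs P)) (prog_defs P) outs
    /\ prog_defs P' = concat outs
    /\ etr Delta Gamma (prog_main P) T (prog_main P').

(* equality of the finite sets represented by two lists *)
Definition seteq {A : Type} (l1 l2 : list A) : Prop := forall x, In x l1 <-> In x l2.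

Definition ctx_trans (Delta Delta' : gctx) : Prop :=
  seteq (It Delta) (Dt Delta') /\ seteq (Dt Delta) (It Delta')
  /\ (forall D, In D (It Delta) ->
        seteq (Dtr Delta D) (Csm Delta' D) /\ seteq (Gen Delta D) (Ctr Delta' D))
  /\ (forall D, In D (Dt Delta) ->
        seteq (Csm Delta D) (Dtr Delta' D) /\ seteq (Ctr Delta D) (Gen Delta' D)).

From Stdlib Require Import String List.
Import ListNotations.

(* [collect] only reads signatures, and every rule of the translation exchanges
   them in a way it sees: an interface D becomes [data D] with one consumer per
   destructor and its generators become constructors, dually for a datatype.
   So every signature collected from P' has a dual one in P and conversely.
   Definitions of untransformed types are copied, but a selected type declared
   as data or interface is transformed, so the copies never touch the sets of
   transformed types. *)

Lemma Forall2_in_l {A B} {R : A -> B -> Prop} {l1 l2 a} :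
  Forall2 R l1 l2 -> In a l1 -> exists b, In b l2 /\ R a b.
Proof.
  induction 1 as [|a' b' l1 l2 Hab _ IH]; simpl; [tauto|].
  intros [<-|Ha]; [eauto|].
  destruct (IH Ha) as (b & Hb & HR); eauto.
Qed.

Lemma Forall2_in_r {A B} {R : A -> B -> Prop} {l1 l2 b} :
  Forall2 R l1 l2 -> In b l2 -> exists a, In a l1 /\ R a b.
Proof. intros H; exact (Forall2_in_l (Forall2_flip H)). Qed.

Definition csm_sig (c : name * params * ty * list clause) : fsig :=
  let '(f, ps, r, _) := c in (f, ps, r).

Section Collect.
Variables (sel : name -> bool) (ds : list defn).

Lemma in_collect_Dt D :
  In D (Dt (collect sel ds)) <-> sel D = true /\ In (DData D) ds.
Proof.
  simpl; rewrite in_flat_map; split.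
  - intros (d & Hd & H); destruct d as [D'| | | |]; try contradiction.
    destruct (sel D') eqn:Hsel; simpl in H; [|contradiction].
    destruct H as [<-|[]]; auto.
  - intros [Hsel Hd]; exists (DData D); rewrite Hsel; simpl; auto.
Qed.

Lemma in_collect_It D :
  In D (It (collect sel ds)) <-> sel D = true /\ exists dts, In (DIface D dts) ds.
Proof.
  simpl; rewrite in_flat_map; split.
  - intros (d & Hd & H); destruct d as [|D' dts| | |]; try contradiction.
    destruct (sel D') eqn:Hsel; simpl in H; [|contradiction].
    destruct H as [<-|[]]; eauto.
  - intros [Hsel [dts Hd]]; exists (DIface D dts); rewrite Hsel; simpl; auto.
Qed.

Lemma in_collect_Ctr D C ps :
  In (C, ps) (Ctr (collect sel ds) D) <-> sel D = true /\ In (DCtr C ps D) ds.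
Proof.
  simpl; destruct (sel D); [rewrite in_flat_map; split | simpl; intuition discriminate].
  - intros (d & Hd & H); destruct d as [| |C' ps' D'| |]; try contradiction.
    destruct (String.eqb_spec D D') as [<-|]; [|contradiction].
    destruct H as [[= <- <-]|[]]; auto.
  - intros [_ Hd]; exists (DCtr C ps D); rewrite String.eqb_refl; simpl; auto.
Qed.

Lemma in_collect_Gen D C ps :
  In (C, ps) (Gen (collect sel ds) D) <->
  sel D = true /\ exists fs, In (DGen C ps D fs) ds.
Proof.
  simpl; destruct (sel D); [rewrite in_flat_map; split | simpl; intuition discriminate].
  - intros (d & Hd & H); destruct d as [| | |C' ps' D' fs|]; try contradiction.
    destruct (String.eqb_spec D D') as [<-|]; [|contradiction].
    destruct H as [[= <- <-]|[]]; eauto.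
  - intros [_ [fs Hd]]; exists (DGen C ps D fs); rewrite String.eqb_refl; simpl; auto.
Qed.

Lemma in_collect_Dtr D x :
  In x (Dtr (collect sel ds) D) <->
  sel D = true /\ exists dts, In (DIface D dts) ds /\ In x (map dtr_sig dts).
Proof.
  simpl; destruct (sel D); [rewrite in_flat_map; split | simpl; intuition discriminate].
  - intros (d & Hd & H); destruct d as [|D' dts| | |]; try contradiction.
    destruct (String.eqb_spec D D') as [<-|]; [eauto | contradiction].
  - intros [_ (dts & Hd & Hx)]; exists (DIface D dts); rewrite String.eqb_refl; auto.
Qed.

Lemma in_collect_Csm D f ps r :
  In (f, ps, r) (Csm (collect sel ds) D) <->
  sel D = true /\ exists cls, In (DCsm f D ps r cls) ds.
Proof.
  simpl; destruct (sel D); [rewrite in_flat_map; split | simpl; intuition discriminate].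
  - intros (d & Hd & H); destruct d as [| | | |f' D' ps' r' cls]; try contradiction.
    destruct (String.eqb_spec D D') as [<-|]; [|contradiction].
    destruct H as [[= <- <- <-]|[]]; eauto.
  - intros [_ [cls Hd]]; exists (DCsm f D ps r cls); rewrite String.eqb_refl; simpl; auto.
Qed.

Lemma Csm_collect D :
  Csm (collect sel ds) D = if sel D then map csm_sig (csms_of ds D) else [].
Proof.
  simpl; destruct (sel D); [|reflexivity].
  unfold csms_of; induction ds as [|d ds' IH]; [reflexivity|].
  simpl; rewrite map_app, IH.
  destruct d as [| | | |f D' ps r cls]; simpl; try destruct (String.eqb D D'); reflexivity.
Qed.

End Collect.

(* [trans_def] seen at the level of signatures, which is all [collect] reads. *)
Inductive yields (Delta : gctx) (ds : list defn) : defn -> defn -> Prop :=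
| yields_It2Dt_data D dts :
    In D (It Delta) -> yields Delta ds (DIface D dts) (DData D)
| yields_It2Dt_csm D dts f ps r cls :
    In D (It Delta) -> In (f, ps, r) (map dtr_sig dts) ->
    yields Delta ds (DIface D dts) (DCsm f D ps r cls)
| yields_Gen2Ctr C ps D fs :
    In D (It Delta) -> yields Delta ds (DGen C ps D fs) (DCtr C ps D)
| yields_Dt2It D dts :
    In D (Dt Delta) -> map dtr_sig dts = map csm_sig (csms_of ds D) ->
    yields Delta ds (DData D) (DIface D dts)
| yields_Ctr2Gen C ps D fs :
    In D (Dt Delta) -> yields Delta ds (DCtr C ps D) (DGen C ps D fs)
| yields_keep_data D :
    ~ transformed Delta D -> yields Delta ds (DData D) (DData D)
| yields_keep_iface D dts dts' :
    ~ transformed Delta D -> yields Delta ds (DIface D dts) (DIface D dts')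
| yields_keep_ctr C ps D :
    ~ transformed Delta D -> yields Delta ds (DCtr C ps D) (DCtr C ps D)
| yields_keep_gen C ps D fs fs' :
    ~ transformed Delta D -> yields Delta ds (DGen C ps D fs) (DGen C ps D fs')
| yields_keep_csm f D ps r cls cls' :
    ~ transformed Delta D -> yields Delta ds (DCsm f D ps r cls) (DCsm f D ps r cls').

Section TransDef.
Local Set Implicit Arguments.
Local Unset Strict Implicit.
Variables (etr : etrans) (Delta : gctx) (ds : list defn).

Lemma dtr_to_csm_sig D dt c :
  dtr_to_csm etr Delta ds D dt c ->
  exists f ps r cls, c = DCsm f D ps r cls /\ dtr_sig dt = (f, ps, r).
Proof.
  unfold dtr_to_csm; destruct (dtr_sig dt) as [[f ps] r].
  intros (gcls & dcl & _ & _ & ->); eauto 6.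
Qed.

Lemma csm_to_dtr_sigs D l dts :
  Forall2 (csm_to_dtr etr Delta D) l dts -> map dtr_sig dts = map csm_sig l.
Proof.
  induction 1 as [|[[[f ps] r] cls] dt l dts Hdt _ IH]; [reflexivity|].
  simpl; rewrite IH; f_equal; unfold csm_to_dtr in Hdt.
  destruct (find is_wild cls) as [[? ?]|]; [destruct Hdt as (e' & _ & ->)|subst];
    reflexivity.
Qed.

Lemma trans_def_yields d out d' :
  trans_def etr Delta ds d out -> In d' out -> yields Delta ds d d'.
Proof.
  destruct 1 as [D dts csms HIt Hcsms| | D dts HDt Hdts| | | | | | |];
    simpl; intros Hin; try (destruct Hin as [<-|[]]; constructor; solve [auto]).
  - destruct Hin as [<-|Hin]; [constructor; exact HIt|].
    destruct (Forall2_in_r Hcsms Hin) as (dt & Hdt & Hc).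
    destruct (dtr_to_csm_sig Hc) as (f & ps & r & cls & -> & Hsig).
    constructor; [exact HIt|]; rewrite <- Hsig; apply in_map; exact Hdt.
  - destruct Hin as [<-|[]]; constructor; [exact HDt | exact (csm_to_dtr_sigs Hdts)].
  - contradiction.
Qed.

Lemma trans_It2Dt_data D dts out :
  In D (It Delta) -> trans_def etr Delta ds (DIface D dts) out -> In (DData D) out.
Proof. intros HIt Ht; inversion Ht; subst; unfold transformed in *; simpl; tauto. Qed.

Lemma trans_It2Dt_csm D dts out f ps r :
  In D (It Delta) -> trans_def etr Delta ds (DIface D dts) out ->
  In (f, ps, r) (map dtr_sig dts) -> exists cls, In (DCsm f D ps r cls) out.
Proof.
  intros HIt Ht Hsig; inversion Ht as [? ? csms _ Hcsms| | | | | | ? ? dts' Hkept| | |];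
    subst; [|destruct Hkept; right; exact HIt].
  apply in_map_iff in Hsig as (dt & Hsig & Hdt).
  destruct (Forall2_in_l Hcsms Hdt) as (c & Hc & Hrel).
  destruct (dtr_to_csm_sig Hrel) as (f' & ps' & r' & cls & -> & Hsig').
  rewrite Hsig in Hsig'; injection Hsig' as -> -> ->.
  exists cls; right; exact Hc.
Qed.

Lemma trans_Gen2Ctr C ps D fs out :
  In D (It Delta) -> trans_def etr Delta ds (DGen C ps D fs) out ->
  In (DCtr C ps D) out.
Proof. intros HIt Ht; inversion Ht; subst; unfold transformed in *; simpl; tauto. Qed.

Lemma trans_Dt2It D out :
  In D (Dt Delta) -> trans_def etr Delta ds (DData D) out ->
  exists dts, In (DIface D dts) out /\ map dtr_sig dts = map csm_sig (csms_of ds D).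
Proof.
  intros HDt Ht; inversion Ht as [| | ? dts _ Hdts| | | ? Hkept| | | |];
    subst; [|destruct Hkept; left; exact HDt].
  exists dts; split; [left; reflexivity | exact (csm_to_dtr_sigs Hdts)].
Qed.

Lemma trans_Ctr2Gen C ps D out :
  In D (Dt Delta) -> trans_def etr Delta ds (DCtr C ps D) out ->
  exists fs, In (DGen C ps D fs) out.
Proof.
  intros HDt Ht; inversion Ht as [| | | ? ? ? fs| | | | ? ? ? Hkept| |];
    subst; [|destruct Hkept; left; exact HDt].
  exists fs; left; reflexivity.
Qed.

End TransDef.

Section Yields.
Local Set Implicit Arguments.
Local Unset Strict Implicit.
Variables (Delta : gctx) (ds : list defn).

Lemma yields_DData_inv d D :
  yields Delta ds d (DData D) ->
  (exists dts, d = DIface D dts /\ In D (It Delta)) \/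
  (d = DData D /\ ~ transformed Delta D).
Proof. inversion 1; eauto. Qed.

Lemma yields_DIface_inv d D dts' :
  yields Delta ds d (DIface D dts') ->
  (d = DData D /\ In D (Dt Delta) /\ map dtr_sig dts' = map csm_sig (csms_of ds D)) \/
  ((exists dts, d = DIface D dts) /\ ~ transformed Delta D).
Proof. inversion 1; eauto. Qed.

Lemma yields_DCtr_inv d C ps D :
  yields Delta ds d (DCtr C ps D) ->
  (exists fs, d = DGen C ps D fs /\ In D (It Delta)) \/
  (d = DCtr C ps D /\ ~ transformed Delta D).
Proof. inversion 1; eauto. Qed.

Lemma yields_DGen_inv d C ps D fs' :
  yields Delta ds d (DGen C ps D fs') ->
  (d = DCtr C ps D /\ In D (Dt Delta)) \/
  ((exists fs, d = DGen C ps D fs) /\ ~ transformed Delta D).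
Proof. inversion 1; eauto. Qed.

Lemma yields_DCsm_inv d f D ps r cls' :
  yields Delta ds d (DCsm f D ps r cls') ->
  (exists dts, d = DIface D dts /\ In D (It Delta) /\ In (f, ps, r) (map dtr_sig dts)) \/
  ((exists cls, d = DCsm f D ps r cls) /\ ~ transformed Delta D).
Proof. inversion 1; eauto 6. Qed.

End Yields.

Section Translation.
Local Set Implicit Arguments.
Local Unset Strict Implicit.
Variables (etr : etrans) (sel : name -> bool) (ds : list defn) (outs : list (list defn)).
Local Notation Delta := (collect sel ds).
Local Notation Delta' := (collect sel (concat outs)).
Hypothesis Htrans : Forall2 (trans_def etr Delta ds) ds outs.

Lemma trans_image d :
  In d ds -> exists out, trans_def etr Delta ds d out /\ incl out (concat outs).
Proof.
  intros Hd; destruct (Forall2_in_l Htrans Hd) as (out & Hout & Ht).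
  exists out; split; [exact Ht|].
  intros d' Hd'; apply in_concat; eauto.
Qed.

Lemma trans_source d' :
  In d' (concat outs) -> exists d, In d ds /\ yields Delta ds d d'.
Proof.
  rewrite in_concat; intros (out & Hout & Hd').
  destruct (Forall2_in_r Htrans Hout) as (d & Hd & Ht).
  eauto using trans_def_yields.
Qed.

Lemma It_Dt_trans : seteq (It Delta) (Dt Delta').
Proof.
  intro D; rewrite in_collect_Dt; split.
  - intros HIt; destruct (proj1 (in_collect_It sel ds D) HIt) as (Hsel & dts & Hd).
    destruct (trans_image Hd) as (out & Ht & Hincl).
    split; [exact Hsel|]; apply Hincl; exact (trans_It2Dt_data HIt Ht).
  - intros [Hsel Hd']; destruct (trans_source Hd') as (d & Hd & Hy).
    destruct (yields_DData_inv Hy) as [(_ & _ & HIt) | (-> & Hkept)];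
      [exact HIt|].
    destruct Hkept; left; apply in_collect_Dt; auto.
Qed.

Lemma Dt_It_trans : seteq (Dt Delta) (It Delta').
Proof.
  intro D; rewrite in_collect_It; split.
  - intros HDt; destruct (proj1 (in_collect_Dt sel ds D) HDt) as [Hsel Hd].
    destruct (trans_image Hd) as (out & Ht & Hincl).
    destruct (trans_Dt2It HDt Ht) as (dts & Hout & _); eauto.
  - intros (Hsel & dts' & Hd'); destruct (trans_source Hd') as (d & Hd & Hy).
    destruct (yields_DIface_inv Hy) as [(_ & HDt & _) | ((dts & ->) & Hkept)];
      [exact HDt|].
    destruct Hkept; right; apply in_collect_It; eauto.
Qed.

Lemma Dtr_Csm_trans D : In D (It Delta) -> seteq (Dtr Delta D) (Csm Delta' D).
Proof.
  intros HIt [[f ps] r]; rewrite in_collect_Dtr, in_collect_Csm; split.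
  - intros (Hsel & dts & Hd & Hsig); destruct (trans_image Hd) as (out & Ht & Hincl).
    destruct (trans_It2Dt_csm HIt Ht Hsig) as (cls & Hc); eauto.
  - intros (Hsel & cls & Hd'); destruct (trans_source Hd') as (d & Hd & Hy).
    destruct (yields_DCsm_inv Hy) as [(dts & -> & _ & Hsig) | (_ & Hkept)];
      [eauto | destruct Hkept; right; exact HIt].
Qed.

Lemma Gen_Ctr_trans D : In D (It Delta) -> seteq (Gen Delta D) (Ctr Delta' D).
Proof.
  intros HIt [C ps]; rewrite in_collect_Gen, in_collect_Ctr; split.
  - intros (Hsel & fs & Hd); destruct (trans_image Hd) as (out & Ht & Hincl).
    split; [exact Hsel|]; apply Hincl; exact (trans_Gen2Ctr HIt Ht).
  - intros (Hsel & Hd'); destruct (trans_source Hd') as (d & Hd & Hy).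
    destruct (yields_DCtr_inv Hy) as [(fs & -> & _) | (_ & Hkept)];
      [eauto | destruct Hkept; right; exact HIt].
Qed.

Lemma Csm_Dtr_trans D : In D (Dt Delta) -> seteq (Csm Delta D) (Dtr Delta' D).
Proof.
  intros HDt; destruct (proj1 (in_collect_Dt sel ds D) HDt) as [Hsel Hd].
  rewrite Csm_collect, Hsel; intro x; rewrite in_collect_Dtr; split.
  - intros Hx; destruct (trans_image Hd) as (out & Ht & Hincl).
    destruct (trans_Dt2It HDt Ht) as (dts & Hout & Hsigs).
    split; [exact Hsel|]; exists dts; rewrite Hsigs; auto.
  - intros (_ & dts & Hd' & Hx); destruct (trans_source Hd') as (d & _ & Hy).
    destruct (yields_DIface_inv Hy) as [(_ & _ & Hsigs) | (_ & Hkept)];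
      [rewrite <- Hsigs; exact Hx | destruct Hkept; left; exact HDt].
Qed.

Lemma Ctr_Gen_trans D : In D (Dt Delta) -> seteq (Ctr Delta D) (Gen Delta' D).
Proof.
  intros HDt [C ps]; rewrite in_collect_Ctr, in_collect_Gen; split.
  - intros (Hsel & Hd); destruct (trans_image Hd) as (out & Ht & Hincl).
    destruct (trans_Ctr2Gen HDt Ht) as (fs & Hout); eauto.
  - intros (Hsel & fs & Hd'); destruct (trans_source Hd') as (d & Hd & Hy).
    destruct (yields_DGen_inv Hy) as [(-> & _) | (_ & Hkept)];
      [auto | destruct Hkept; left; exact HDt].
Qed.

End Translation.

Theorem lemmaB5 (etr : etrans) (sel : name -> bool) (P P' : program)
  (Gamma : lctx) (T : ty) (Delta Delta' : gctx) :
  Delta = collect sel (prog_defs P) ->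
  trans_prog etr Delta Gamma P T P' ->
  Delta' = collect sel (prog_defs P') ->
  ctx_trans Delta Delta'.
Proof.
  intros -> (outs & Htrans & -> & _) ->.
  split; [|split; [|split]].
  - exact (It_Dt_trans Htrans).
  - exact (Dt_It_trans Htrans).
  - intros D HIt; exact (conj (Dtr_Csm_trans Htrans HIt) (Gen_Ctr_trans Htrans HIt)).
  - intros D HDt; exact (conj (Csm_Dtr_trans Htrans HDt) (Ctr_Gen_trans Htrans HDt)).
Qed.
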